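(* Let $\mathcal H_S$, $\mathcal K$ be Hilbert spaces, $\mathcal B_S=\mathcal B(\mathcal H_S)$, $\mathcal F=\Gamma(L^2(\mathbb R,\mathcal K))$, let $\mathcal S_0\subseteq L^2(\mathbb R,\mathcal K)$ be a totalizing set, and let $r<s<t$. Let $(Q_{f,g})$ be a completely positive kernel on $\mathcal B_S$ based on $\chi_{[r,s]}\mathcal S_0$ and $(P_{f,g})$ a completely positive kernel on $\mathcal B_S$ based on $\chi_{[s,t]}\mathcal S_0$, and for $f,g\in\mathcal S_0$ put $Q_{f,g}:=Q_{\chi_{[r,s]}f,\chi_{[r,s]}g}$ and $P_{f,g}:=P_{\chi_{[s,t]}f,\chi_{[s,t]}g}$. Then the family $\{Q_{f,g}\circ P_{f,g}:f,g\in\mathcal S_0\}$ (composition of maps $\mathcal B_S\to\mathcal B_S$) is a completely positive kernel on $\mathcal B_S$.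
   Context: $\psi_f=\sum_{k\ge0}f^{\otimes k}/\sqrt{k!}$ is the exponential vector; $\mathcal S_0$ is totalizing if $\{\psi_f:f\in\mathcal S_0\}$ is total in $\mathcal F$; $\chi_I\mathcal S_0=\{\chi_If:f\in\mathcal S_0\}$. A completely positive kernel on a $C^*$-algebra $\mathcal B$ based on a set $\mathcal S$ is a family $\{P_{f,g}:f,g\in\mathcal S\}$ of linear maps $\mathcal B\to\mathcal B$ such that for every $n$, $f_1,\dots,f_n\in\mathcal S$, $b_1,\dots,b_n\in\mathcal B$, the map $x\mapsto\sum_{j,k}b_j^*P_{f_j,f_k}(x)b_k$ is completely positive. *)

From HB Require Import structures.
From mathcomp Require Import all_boot all_order all_algebra.
From mathcomp Require Import complex.
From mathcomp Require Import reals.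
Set Implicit Arguments. Unset Strict Implicit. Unset Printing Implicit Defensive.
Import Order.TTheory GRing.Theory Num.Theory.
Local Open Scope ring_scope.

Section Hilbert.
Variable R : realType.
Local Notation C := (complex R).
Variable H : lmodType C.
(* inner product, conjugate-linear in the first, linear in the second argument *)
Variable ip : H -> H -> C.

Definition is_hilbert : Prop :=
  [/\ (forall x y z (a : C), ip x (a *: y + z) = a * ip x y + ip x z),
      (forall x y, ip y x = (ip x y)^*),
      (forall x, 0 <= ip x x),
      (forall x, ip x x = 0 -> x = 0) &
      (forall u : nat -> H,
         (forall eps : C, 0 < eps -> exists N, forall m n, (N <= m)%N -> (N <= n)%N ->
            ip (u m - u n) (u m - u n) < eps) ->
         exists l : H, forall eps : C, 0 < eps -> exists N, forall n, (N <= n)%N ->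
            ip (u n - l) (u n - l) < eps)].

Definition bounded (a : H -> H) : Prop :=
  (forall (k : C) x y, a (k *: x + y) = k *: a x + a y) /\
  exists M : C, forall x, ip (a x) (a x) <= M * ip x x.

Definition is_adjoint (a c : H -> H) : Prop := forall x y, ip (a x) y = ip x (c y).

(* maps B(H) -> B(H), represented on all functions but only meaningful on B(H) *)
Definition Bmap := (H -> H) -> (H -> H).

Definition linear_Bmap (T : Bmap) : Prop :=
  (forall a, bounded a -> bounded (T a)) /\
  (forall (k : C) a b, bounded a -> bounded b ->
     T (fun v => k *: a v + b v) = (fun v => k *: T a v + T b v)).

(* positivity of an element of M_n(B(H)), i.e. as an operator on H^n *)
Definition pos_mx n (X : 'I_n -> 'I_n -> H -> H) : Prop :=
  forall xi : 'I_n -> H, 0 <= \sum_(i < n) \sum_(j < n) ip (xi i) (X i j (xi j)).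

Definition completely_positive (T : Bmap) : Prop :=
  forall n (X : 'I_n -> 'I_n -> H -> H),
    (forall i j, bounded (X i j)) -> pos_mx X -> pos_mx (fun i j => T (X i j)).

Definition cp_kernel (L : Type) (A : L -> Prop) (P : L -> L -> Bmap) : Prop :=
  (forall f g, A f -> A g -> linear_Bmap (P f g)) /\
  forall n (fs : 'I_n -> L) (b c : 'I_n -> H -> H),
    (forall j, A (fs j)) -> (forall j, bounded (b j)) -> (forall j, is_adjoint (b j) (c j)) ->
    completely_positive
      (fun x v => \sum_(j < n) \sum_(k < n) c j (P (fs j) (fs k) x (b k v))).

End Hilbert.

Definition image_set (L : Type) (chi : L -> L) (S0 : L -> Prop) : L -> Prop :=
  fun y => exists f, S0 f /\ y = chi f.

From HB Require Import structures.
From mathcomp Require Import all_boot all_order all_algebra.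
From mathcomp Require Import complex.
From mathcomp Require Import reals boolp.
From mathcomp Require Import ring.

(* For a completely positive kernel P, labels f_i and a positive matrix X over
   B(H) indexed by a finite set K, the block matrix [P_{f_i,f_j}(X_ab)] indexed
   by pairs (i, a) is positive. If H contains |K| nonzero orthogonal vectors
   g_a, this is the defining property of P applied to finite-rank operators b_i
   sending g_a to the (i, a) component of a test vector. Otherwise H has a
   finite orthogonal basis g: X is then a combination of the matrix units
   |g_a><g_b| with a positive scalar coefficient matrix, and the first case
   together with the Schur product theorem (sum_ij x_ij c_ij >= 0 for positive
   scalar matrices x, c) gives positivity. Applying this to P and then to Q and
   keeping the diagonal blocks yields positivity of [Q_jk (P_jk (X_pq))], which
   is complete positivity of the composed kernel. *)

Set Implicit Arguments. Unset Strict Implicit. Unset Printing Implicit Defensive.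
Import Order.TTheory GRing.Theory Num.Theory.
Local Open Scope ring_scope.

Section BigSums.
Variable V : nmodType.

Lemma exchange_big22 (I1 I2 I3 I4 : finType) (G : I1 -> I2 -> I3 -> I4 -> V) :
  \sum_a \sum_b \sum_c \sum_d G a b c d = \sum_c \sum_d \sum_a \sum_b G a b c d.
Proof.
under eq_bigr => a _ do rewrite exchange_big.
under eq_bigr => a _ do under eq_bigr => c _ do rewrite exchange_big.
by rewrite exchange_big; under eq_bigr => c _ do rewrite exchange_big.
Qed.

Lemma pair_bigA2 (T K : finType) (F : T * K -> T * K -> V) :
  \sum_i \sum_j F i j = \sum_I \sum_J \sum_p \sum_q F (I, p) (J, q).
Proof.
transitivity (\sum_I \sum_p \sum_J \sum_q F (I, p) (J, q)); last first.
  by apply: eq_bigr => I _; rewrite exchange_big.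
rewrite (pair_bigA _ (fun I p => \sum_J \sum_q F (I, p) (J, q))).
apply: eq_bigr => -[I p] _ /=.
by rewrite (pair_bigA _ (fun J q => F (I, p) (J, q))); apply: eq_bigr => -[J q].
Qed.

Lemma sum_enum_val (K : finType) (F : K -> V) :
  \sum_(p < #|K|) F (enum_val p) = \sum_a F a.
Proof.
by rewrite [RHS](reindex (fun p : 'I_#|K| => enum_val p)) //; exact/onW_bij/enum_val_bij.
Qed.

End BigSums.

Section PsdMatrices.
Variables (C : numClosedFieldType) (I : finType).
Implicit Types (x c : I -> I -> C) (z : I -> C).

Definition delta k : I -> C := fun i => (i == k)%:R.

Lemma sum_mul_delta (f : I -> C) k : \sum_j f j * delta k j = f k.
Proof.
rewrite (bigD1 k) //= /delta eqxx mulr1 big1 ?addr0 // => j /negbTE ->.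
by rewrite mulr0.
Qed.

Lemma sum_delta_mul (f : I -> C) k : \sum_j delta k j * f j = f k.
Proof. by rewrite -[RHS](sum_mul_delta f k); apply: eq_bigr => j _; rewrite mulrC. Qed.

Lemma conj_delta k i : (delta k i)^* = delta k i.
Proof. exact: conjC_nat. Qed.

Definition qf x z := \sum_i \sum_j (z i)^* * x i j * z j.
Definition psd x := forall z, 0 <= qf x z.

Lemma qf_add_delta x z t k :
  qf x (fun i => z i + t * delta k i) =
  qf x z + t * (\sum_i (z i)^* * x i k) + t^* * (\sum_j x k j * z j) + t^* * t * x k k.
Proof.
have row i : \sum_j (z i + t * delta k i)^* * x i j * (z j + t * delta k j) =
    (z i)^* * (\sum_j x i j * z j) + t * ((z i)^* * x i k)
    + delta k i * (t^* * (\sum_j x i j * z j) + t^* * t * x i k).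
  rewrite rmorphD rmorphM /= conj_delta.
  set w := (z i)^* + _.
  have -> : \sum_j w * x i j * (z j + t * delta k j) =
            \sum_j (w * (x i j * z j) + w * t * (x i j * delta k j)).
    by apply: eq_bigr => j _; ring.
  by rewrite big_split /= -!mulr_sumr sum_mul_delta /w; ring.
rewrite /qf (eq_bigr _ (fun i _ => row i)) !big_split /= sum_delta_mul -!mulr_sumr.
rewrite addrA; congr (_ + _ + _ + _); apply: eq_bigr => i _.
by rewrite mulr_sumr; apply: eq_bigr => j _; rewrite mulrA.
Qed.

Lemma qf_delta2 x k l s t :
  qf x (fun i => s * delta k i + t * delta l i) =
  s^* * s * x k k + s^* * t * x k l + t^* * s * x l k + t^* * t * x l l.
Proof.
rewrite qf_add_delta.
have -> : qf x (fun i => s * delta k i) = s^* * s * x k k.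
  rewrite /qf -(sum_delta_mul (fun i => s^* * s * x i k)); apply: eq_bigr => i _.
  rewrite (eq_bigr (fun j => s^* * delta k i * s * x i j * delta k j)) ?sum_mul_delta.
    by ring.
  by move=> j _; rewrite rmorphM /= conj_delta; ring.
rewrite (eq_bigr (fun i => s^* * (x i l * delta k i))); last first.
  by move=> i _; rewrite rmorphM /= conj_delta; ring.
rewrite -mulr_sumr sum_mul_delta (eq_bigr (fun j => s * (x l j * delta k j))); last first.
  by move=> j _; ring.
by rewrite -mulr_sumr sum_mul_delta; ring.
Qed.

Lemma psd_diag_ge0 x k : psd x -> 0 <= x k k.
Proof.
move/(_ (fun i => 1 * delta k i + 0 * delta k i)).
by rewrite qf_delta2 conjC1 conjC0 !(mulr1, mul1r, mulr0, mul0r, addr0).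
Qed.

Lemma psd_conj x k l : psd x -> x l k = (x k l)^*.
Proof.
move=> hx; have rk := geC0_conj (psd_diag_ge0 k hx); have rl := geC0_conj (psd_diag_ge0 l hx).
(* test vectors e_k + e_l and e_k + i e_l: the quadratic form is real on both *)
have e1 := geC0_conj (hx (fun i => 1 * delta k i + 1 * delta l i)).
have e2 := geC0_conj (hx (fun i => 1 * delta k i + 'i * delta l i)).
rewrite qf_delta2 conjC1 !mul1r !rmorphD /= rk rl in e1.
rewrite qf_delta2 conjC1 !(mulr1, mul1r) conjCi !rmorphD !rmorphM !rmorphN /= conjCi in e2.
rewrite !opprK rk rl in e2.
set a := x k l in e1 e2 *; set b := x l k in e1 e2 *.
move/eqP: e1; rewrite -subr_eq0 => /eqP e1; move/eqP: e2; rewrite -subr_eq0 => /eqP e2.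
have h1 : a^* + b^* - a - b = 0 by rewrite -e1; ring.
have /eqP : 'i * (b^* - a^* - a + b) = 0 by rewrite -e2; ring.
rewrite mulf_eq0 (negbTE (neq0Ci C)) /= => /eqP h2.
have : 2 * (b - a^*) = (b^* - a^* - a + b) - (a^* + b^* - a - b) by ring.
by rewrite h1 h2 subr0 => /eqP; rewrite mulf_eq0 pnatr_eq0 /= subr_eq0 => /eqP.
Qed.

Lemma psd_row_eq0 x k l : psd x -> x k k = 0 -> x k l = 0.
Proof.
move=> hx hkk; apply/eqP/negPn/negP => nz.
have hl := psd_diag_ge0 l hx.
set s := - (x l l + 1) / (x k l)^*.
have := hx (fun i => s * delta k i + 1 * delta l i).
have -> : qf x (fun i => s * delta k i + 1 * delta l i) = - (x l l + 2).
  rewrite qf_delta2 hkk (psd_conj k l hx) conjC1 /s !(rmorphM, rmorphN, rmorphD) /=.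
  by rewrite fmorphV /= conjCK conjC1 (geC0_conj hl); field; rewrite /= conjC_eq0 nz.
have : 0 < x l l + 2 by rewrite ltr_wpDl ?ltr0n.
by rewrite -oppr_lt0 => /lt_le_trans/[apply]; rewrite ltxx.
Qed.

Lemma psd_schur_compl x k : psd x -> x k k != 0 ->
  psd (fun i j => x i j - x i k * x k j / x k k).
Proof.
move=> hx hk z; set a := \sum_j x k j * z j.
have col : \sum_i (z i)^* * x i k = a^*.
  rewrite /a rmorph_sum; apply: eq_bigr => i _.
  by rewrite rmorphM /= -(psd_conj k i hx) mulrC.
have rk := geC0_conj (psd_diag_ge0 k hx).
(* the form of x at z - (a / x k k) e_k is the Schur complement form at z *)
have := hx (fun i => z i + (- a / x k k) * delta k i).
rewrite qf_add_delta col !(rmorphM, rmorphN) /= fmorphV /= rk.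
have -> : qf x z + - a / x k k * a^* + - a^* / x k k * a
          + - a^* / x k k * (- a / x k k) * x k k = qf x z - a^* * a / x k k by field.
suff -> : qf (fun i j => x i j - x i k * x k j / x k k) z = qf x z - a^* * a / x k k by [].
have corr : \sum_i \sum_j (z i)^* * (x i k * x k j / x k k) * z j = a^* * a / x k k.
  rewrite -col -mulrA mulr_suml; apply: eq_bigr => i _.
  by rewrite /a mulr_suml mulr_sumr; apply: eq_bigr => j _; ring.
rewrite /qf -corr -sumrB; apply: eq_bigr => i _; rewrite -sumrB.
by apply: eq_bigr => j _; ring.
Qed.

Lemma psd_sum_mul_ge0 x c : psd x -> psd c -> 0 <= \sum_i \sum_j x i j * c i j.
Proof.
move=> hx hc.
(* induction on the set of nonzero rows: y is its Schur complement at k plus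
   the rank-one matrix (y k i)^* y k j / y k k, whose pairing with c is a value
   of the form of c *)
suff gen (s : seq I) y : psd y -> (forall i j, i \notin s -> y i j = 0) ->
    0 <= \sum_i \sum_j y i j * c i j.
  by apply: (gen (enum I)) => // i j; rewrite mem_enum.
elim: s y => [|k s IH] y hy ys.
  by rewrite big1 // => i _; rewrite big1 // => j _; rewrite ys ?mul0r.
have [ykk0|ykk] := eqVneq (y k k) 0.
  apply: IH => // i j; have [-> _|ik iNs] := eqVneq i k; first exact: psd_row_eq0.
  by apply: ys; rewrite in_cons negb_or ik.
set y' := fun i j => y i j - y i k * y k j / y k k.
have y's i j : i \notin s -> y' i j = 0.
  move=> iNs; rewrite /y'; have [->|ik] := eqVneq i k.
    by rewrite mulrAC divff // mul1r subrr.
  have iNks : i \notin k :: s by rewrite in_cons negb_or ik.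
  by rewrite (ys i j) // (ys i k) // !mul0r subrr.
have -> : \sum_i \sum_j y i j * c i j = \sum_i \sum_j y' i j * c i j +
    (y k k)^-1 * \sum_i \sum_j (y k i)^* * c i j * y k j.
  rewrite mulr_sumr -big_split; apply: eq_bigr => i _.
  rewrite mulr_sumr -big_split; apply: eq_bigr => j _.
  by rewrite /y' /= -(psd_conj k i hy); ring.
apply: addr_ge0; first exact/IH/y's/psd_schur_compl.
by rewrite mulr_ge0 ?invr_ge0 ?psd_diag_ge0 //; apply: (hc (fun i => y k i)).
Qed.

End PsdMatrices.

Section HilbertSpace.
Variable R : realType.
Local Notation C := (complex R).
Variables (H : lmodType C) (ip : H -> H -> C).
Hypothesis hH : is_hilbert ip.

Lemma ipDZr x y z a : ip x (a *: y + z) = a * ip x y + ip x z.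
Proof. by case: hH => + _ _ _ _; apply. Qed.
Lemma ipC x y : ip y x = (ip x y)^*.
Proof. by case: hH => _ + _ _ _; apply. Qed.
Lemma ip_ge0 x : 0 <= ip x x.
Proof. by case: hH => _ _ + _ _; apply. Qed.
Lemma ip_eq0 x : ip x x = 0 -> x = 0.
Proof. by case: hH => _ _ _ + _; apply. Qed.

Lemma ipr0 x : ip x 0 = 0.
Proof.
by have := ipDZr x 0 0 (-1); rewrite scaleN1r addNr mulN1r addNr.
Qed.

Lemma ipDr x y z : ip x (y + z) = ip x y + ip x z.
Proof. by have := ipDZr x y z 1; rewrite scale1r mul1r. Qed.

Lemma ipZr x y a : ip x (a *: y) = a * ip x y.
Proof. by have := ipDZr x y 0 a; rewrite addr0 ipr0 addr0. Qed.

Lemma ipNr x y : ip x (- y) = - ip x y.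
Proof. by rewrite -scaleN1r ipZr mulN1r. Qed.

Lemma ipBr x y z : ip x (y - z) = ip x y - ip x z.
Proof. by rewrite ipDr ipNr. Qed.

Lemma ipl0 x : ip 0 x = 0.
Proof. by rewrite ipC ipr0 conjC0. Qed.

Lemma ipDl x y z : ip (y + z) x = ip y x + ip z x.
Proof. by rewrite (ipC x) (ipC x y) (ipC x z) ipDr rmorphD. Qed.

Lemma ipZl x y a : ip (a *: y) x = a^* * ip y x.
Proof. by rewrite (ipC x) (ipC x y) ipZr rmorphM. Qed.

Lemma ipNl x y : ip (- y) x = - ip y x.
Proof. by rewrite -scaleN1r ipZl rmorphN1 mulN1r. Qed.

Lemma ipBl x y z : ip (y - z) x = ip y x - ip z x.
Proof. by rewrite ipDl ipNl. Qed.

Lemma ip_sumr (I : Type) (r : seq I) (Pr : pred I) (F : I -> H) x :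
  ip x (\sum_(i <- r | Pr i) F i) = \sum_(i <- r | Pr i) ip x (F i).
Proof. exact: (big_morph (ip x) (ipDr x) (ipr0 x)). Qed.

Lemma ip_suml (I : Type) (r : seq I) (Pr : pred I) (F : I -> H) x :
  ip (\sum_(i <- r | Pr i) F i) x = \sum_(i <- r | Pr i) ip (F i) x.
Proof. exact: (big_morph (ip^~ x) (fun y z => ipDl x y z) (ipl0 x)). Qed.

Lemma conj_ip_self x : (ip x x)^* = ip x x.
Proof. exact/geC0_conj/ip_ge0. Qed.

Lemma ip_Cauchy_Schwarz x y : ip x y * (ip x y)^* <= ip x x * ip y y.
Proof.
have [x0|xn0] := eqVneq (ip x x) 0; first by rewrite x0 mul0r (ip_eq0 x0) ipl0 mul0r.
set n := ip x x; set c := ip x y.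
have n_gt0 : 0 < n by rewrite lt_def xn0 ip_ge0.
(* 0 <= |n y - c x|^2 = n (n |y|^2 - |c|^2) *)
have := ip_ge0 (n *: y - c *: x).
have -> : ip (n *: y - c *: x) (n *: y - c *: x) = n * (n * ip y y - c * c^*).
  by rewrite !ipBl !ipBr !ipZl !ipZr conj_ip_self -/n -/c (ipC x y) -/c; ring.
by rewrite pmulr_rge0 // subr_ge0.
Qed.

Lemma ipDD_le x y : ip (x + y) (x + y) <= 2 * (ip x x + ip y y).
Proof.
have <- : ip (x + y) (x + y) + ip (x - y) (x - y) = 2 * (ip x x + ip y y).
  by rewrite !ipDl !ipDr !ipNl !ipNr; ring.
by rewrite lerDl ip_ge0.
Qed.


Lemma bounded_additive a : bounded ip a -> {morph a : x y / x + y}.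
Proof. by case=> lin _ x y; have := lin 1 x y; rewrite !scale1r. Qed.

Lemma bounded0 a : bounded ip a -> a 0 = 0.
Proof. by move=> /bounded_additive aD; apply/(addrI (a 0)); rewrite -aD !addr0. Qed.

Lemma boundedZ a k x : bounded ip a -> a (k *: x) = k *: a x.
Proof.
by move=> ha; case: (ha) => lin _; have := lin k x 0; rewrite (bounded0 ha) !addr0.
Qed.

Lemma bounded_sum_morph a (I : Type) (r : seq I) (Pr : pred I) (F : I -> H) :
  bounded ip a -> a (\sum_(i <- r | Pr i) F i) = \sum_(i <- r | Pr i) a (F i).
Proof. by move=> ha; apply: (big_morph a (bounded_additive ha) (bounded0 ha)). Qed.

Lemma bounded_zero : bounded ip (fun _ => 0).
Proof.
split=> [k x y|]; first by rewrite scaler0 addr0.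
by exists 0 => x; rewrite ipl0 mul0r.
Qed.

Lemma bounded_comb k a b : bounded ip a -> bounded ip b ->
  bounded ip (fun v => k *: a v + b v).
Proof.
move=> [la [Ma hMa]] [lb [Mb hMb]]; split=> [k' x y|].
  by rewrite la lb scalerDr !scalerA mulrC scalerDr scalerA addrACA.
exists (2 * (k^* * k * Ma + Mb)) => x.
apply: le_trans (ipDD_le _ _) _.
rewrite -[2 * _ * ip x x]mulrA ler_wpM2l // mulrDl ipZl ipZr mulrA lerD ?hMb //.
by rewrite -[_ * Ma * _]mulrA ler_wpM2l // mulrC mul_conjC_ge0.
Qed.

Lemma bounded_sum (I : Type) (r : seq I) (F : I -> H -> H) :
  (forall i, bounded ip (F i)) -> bounded ip (fun v => \sum_(i <- r) F i v).
Proof.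
move=> hF; elim: r => [|i r IH].
  by under [X in bounded _ X]funext do rewrite big_nil; exact: bounded_zero.
under [X in bounded _ X]funext do rewrite big_cons -[F i _]scale1r.
exact: bounded_comb.
Qed.

Definition rank1 (h u : H) : H -> H := fun v => ip h v *: u.

Lemma bounded_rank1 h u : bounded ip (rank1 h u).
Proof.
split=> [k x y|]; first by rewrite /rank1 ipDZr scalerDl scalerA.
exists (ip h h * ip u u) => x.
rewrite /rank1 ipZl ipZr mulrA [ip h h * _ * _]mulrAC ler_wpM2r ?ip_ge0 //.
by rewrite mulrC ip_Cauchy_Schwarz.
Qed.

Lemma linear_Bmap0 T : linear_Bmap ip T -> T (fun _ => 0) = fun _ => 0.
Proof.
case=> _ Tl; have := Tl (-1) _ _ bounded_zero bounded_zero.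
under [X in T X = _ -> _]funext do rewrite scaleN1r oppr0 add0r.
by move->; apply: funext => v; rewrite scaleN1r addNr.
Qed.

Lemma linear_Bmap_sum T (I : Type) (r : seq I) (k : I -> C) (F : I -> H -> H) :
  linear_Bmap ip T -> (forall i, bounded ip (F i)) ->
  T (fun v => \sum_(i <- r) k i *: F i v) = fun v => \sum_(i <- r) k i *: T (F i) v.
Proof.
move=> hT hF; elim: r => [|i r IH].
  under [X in T X = _]funext do rewrite big_nil.
  by rewrite linear_Bmap0 //; apply: funext => v; rewrite big_nil.
have hsum : bounded ip (fun v => \sum_(j <- r) k j *: F j v).
  apply: bounded_sum => j.
  by under [X in bounded _ X]funext do rewrite -[_ *: _]addr0; exact: bounded_comb bounded_zero.
under [X in T X = _]funext do rewrite big_cons.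
by case: hT => _ ->; rewrite ?IH //; apply: funext => v; rewrite big_cons.
Qed.

Lemma linear_Bmap_comp S T : linear_Bmap ip S -> linear_Bmap ip T ->
  linear_Bmap ip (fun x => S (T x)).
Proof.
move=> [Sb Sl] [Tb Tl]; split=> [a ha|k a b ha hb]; first exact/Sb/Tb.
by rewrite Tl // Sl //; apply: Tb.
Qed.

Definition pos_fmx (K : finType) (X : K -> K -> H -> H) :=
  forall xi : K -> H, 0 <= \sum_a \sum_b ip (xi a) (X a b (xi b)).

Lemma pos_fmx_comp (K K' : finType) (phi : K' -> K) (X : K -> K -> H -> H) :
  (forall a b, {morph X a b : x y / x + y}) -> pos_fmx X ->
  pos_fmx (fun a b => X (phi a) (phi b)).
Proof.
move=> XD hX xi; pose eta k := \sum_(a | phi a == k) xi a.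
have X0 a b : X a b 0 = 0 by apply/(addrI (X a b 0)); rewrite -XD !addr0.
suff -> : \sum_a \sum_b ip (xi a) (X (phi a) (phi b) (xi b)) =
          \sum_k \sum_l ip (eta k) (X k l (eta l)) by exact: hX.
rewrite (partition_big phi xpredT) //=; apply: eq_bigr => k _.
under [RHS]eq_bigr => l _ do rewrite ip_suml.
rewrite [RHS]exchange_big; apply: eq_bigr => a /eqP <-.
rewrite (partition_big phi xpredT) //=; apply: eq_bigr => l _.
rewrite (big_morph (X _ l) (XD _ l) (X0 _ l)) ip_sumr.
by apply: eq_bigr => b /eqP <-.
Qed.

Lemma pos_fmx_enum_val (K : finType) (X : K -> K -> H -> H) :
  pos_fmx (fun p q : 'I_#|K| => X (enum_val p) (enum_val q)) -> pos_fmx X.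
Proof.
move=> hX xi; rewrite -sum_enum_val; under eq_bigr => p _ do rewrite -sum_enum_val.
exact: (hX (xi \o enum_val)).
Qed.

Definition orth_family (D : finType) (g : D -> H) :=
  (forall a, ip (g a) (g a) != 0) /\ (forall a b, a != b -> ip (g a) (g b) = 0).

Definition orth_expand (D : finType) (g : D -> H) (x : H) : H :=
  \sum_a (ip (g a) x / ip (g a) (g a)) *: g a.

Lemma orth_family_or_basis k :
  (exists g : 'I_k -> H, orth_family g) \/
  (exists d (g : 'I_d -> H), orth_family g /\ forall x, orth_expand g x = x).
Proof.
elim: k => [|k [[g [gnz gorth]]|]]; last by right.
  by left; exists (fun _ => 0); split; case.
have [basis|/existsNP[x xNexp]] := pselect (forall x, orth_expand g x = x).
  by right; exists k, g.
(* Gram-Schmidt: adjoin the residue of x to g *)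
pose r := x - orth_expand g x.
have r_orth a : ip (g a) r = 0.
  rewrite ipBr ip_sumr (bigD1 a) //= ipZr mulfVK // big1 ?addr0 ?subrr // => b ba.
  by rewrite ipZr (gorth a b) ?mulr0 // eq_sym.
have r_nz : ip r r != 0.
  by apply/eqP => /ip_eq0/eqP; rewrite subr_eq0 => /eqP xE; apply: xNexp; rewrite -xE.
left; exists (fun i : 'I_k.+1 => if unlift ord_max i is Some j then g j else r).
split=> [a|a b]; first by case: unliftP.
case: unliftP => [i ->|->]; case: unliftP => [j ->|->] //; rewrite ?eqxx //.
- by move=> ij; apply: gorth; apply: contra ij => /eqP ->.
- by rewrite ipC r_orth conjC0.
Qed.

Section MatrixUnits.
Variables (D : finType) (g : D -> H).

Definition mx_unit a b : H -> H := rank1 (g b) (g a).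

Definition mx_coef (Y : H -> H) a b :=
  ip (g a) (Y (g b)) / (ip (g a) (g a) * ip (g b) (g b)).

Lemma pos_fmx_mx_unit : pos_fmx mx_unit.
Proof.
move=> xi; set s := \sum_b ip (g b) (xi b).
suff -> : \sum_a \sum_b ip (xi a) (mx_unit a b (xi b)) = s^* * s.
  by rewrite mulrC mul_conjC_ge0.
rewrite rmorph_sum mulr_suml; apply: eq_bigr => a _; rewrite mulr_sumr.
by apply: eq_bigr => b _; rewrite /mx_unit /rank1 ipZr /= -ipC mulrC.
Qed.

Hypothesis g_basis : forall x, orth_expand g x = x.

Lemma mx_unit_expand Y : bounded ip Y ->
  Y = fun v => \sum_(ab : D * D) mx_coef Y ab.1 ab.2 *: mx_unit ab.1 ab.2 v.
Proof.
move=> hY; apply: funext => v.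
rewrite -{1}(g_basis v) /orth_expand bounded_sum_morph //.
under eq_bigr => b _ do rewrite boundedZ // -[Y (g b)]g_basis /orth_expand scaler_sumr.
rewrite exchange_big -(pair_bigA _ (fun a b => mx_coef Y a b *: mx_unit a b v)).
apply: eq_bigr => a _; apply: eq_bigr => b _.
by rewrite /mx_unit /rank1 /mx_coef !scalerA invfM; congr (_ *: _); ring.
Qed.

Lemma psd_mx_coef (K : finType) (X : K -> K -> H -> H) :
  (forall p q, bounded ip (X p q)) -> pos_fmx X ->
  psd (fun i j : K * D => mx_coef (X i.1 j.1) i.2 j.2).
Proof.
move=> hX posX z; pose n a := ip (g a) (g a).
have := posX (fun p => \sum_a (z (p, a) / n a) *: g a).
rewrite /qf pair_bigA2.
congr (0 <= _); apply: eq_bigr => p _; apply: eq_bigr => q _.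
rewrite bounded_sum_morph // ip_suml; apply: eq_bigr => a _.
rewrite ipZl ip_sumr; under eq_bigr => b _ do rewrite boundedZ // ipZr.
rewrite mulr_sumr; apply: eq_bigr => b _.
rewrite !(rmorphM, fmorphV) /= conj_ip_self /mx_coef invfM; ring.
Qed.

End MatrixUnits.

Section Kernels.
Variable L : Type.
Implicit Types (P : L -> L -> Bmap H) (T K D : finType).

Definition kernel_map P T (lab : T -> L) (b c : T -> H -> H) : Bmap H :=
  fun x v => \sum_j \sum_k c j (P (lab j) (lab k) x (b k v)).

Definition kernel_block P T K (lab : T -> L) (X : K -> K -> H -> H) :
    T * K -> T * K -> H -> H :=
  fun i j => P (lab i.1) (lab j.1) (X i.2 j.2).

Lemma kernel_map_enum_val P T (lab : T -> L) b c :
  kernel_map P (fun j : 'I_#|T| => lab (enum_val j)) (b \o enum_val) (c \o enum_val) =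
  kernel_map P lab b c.
Proof.
apply: funext => x; apply: funext => v; symmetry; rewrite /kernel_map -sum_enum_val.
by apply: eq_bigr => j _; rewrite -sum_enum_val.
Qed.

Lemma kernel_map_form P T K (lab : T -> L) b c (X : K -> K -> H -> H) (xi : K -> H) :
  (forall j, is_adjoint ip (b j) (c j)) ->
  \sum_p \sum_q ip (xi p) (kernel_map P lab b c (X p q) (xi q)) =
  \sum_i \sum_j ip (b i.1 (xi i.2)) (kernel_block P lab X i j (b j.1 (xi j.2))).
Proof.
move=> hbc; rewrite pair_bigA2 [RHS]exchange_big22.
apply: eq_bigr => p _; apply: eq_bigr => q _.
rewrite ip_sumr; apply: eq_bigr => j _; rewrite ip_sumr; apply: eq_bigr => k _.
by rewrite hbc.
Qed.

Lemma pos_kernel_map P T K (lab : T -> L) b c (X : K -> K -> H -> H) :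
  (forall j, is_adjoint ip (b j) (c j)) -> pos_fmx (kernel_block P lab X) ->
  pos_fmx (fun p q => kernel_map P lab b c (X p q)).
Proof. by move=> hbc posX xi; rewrite kernel_map_form //; apply: posX. Qed.

Variables (A : L -> Prop) (P : L -> L -> Bmap H).
Hypothesis hP : cp_kernel ip A P.

Lemma kernel_block_bounded T K (lab : T -> L) (X : K -> K -> H -> H) :
  (forall j, A (lab j)) -> (forall p q, bounded ip (X p q)) ->
  forall i j, bounded ip (kernel_block P lab X i j).
Proof. by move=> hlab hX i j; apply: (hP.1 _ _ (hlab _) (hlab _)).1. Qed.

Lemma cp_kernel_fin T K (lab : T -> L) b c (X : K -> K -> H -> H) :
  (forall j, A (lab j)) -> (forall j, bounded ip (b j)) ->
  (forall j, is_adjoint ip (b j) (c j)) ->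
  (forall p q, bounded ip (X p q)) -> pos_fmx X ->
  pos_fmx (fun p q => kernel_map P lab b c (X p q)).
Proof.
move=> hlab hb hbc hX posX; apply: pos_fmx_enum_val; rewrite -kernel_map_enum_val.
apply: hP.2 => [j|j|j|p q|]; [exact: hlab|exact: hb|exact: hbc|exact: hX|].
exact: pos_fmx_comp (fun p q => bounded_additive (hX p q)) posX.
Qed.

Lemma pos_kernel_block_orth T K (lab : T -> L) (g : K -> H) (X : K -> K -> H -> H) :
  orth_family g -> (forall j, A (lab j)) -> (forall p q, bounded ip (X p q)) ->
  pos_fmx X -> pos_fmx (kernel_block P lab X).
Proof.
move=> [g_nz g_orth] hlab hX posX xi.
(* b j := sum_a |xi (j, a)><dual a| maps g a to xi (j, a) *)
pose dual a := (ip (g a) (g a))^-1 *: g a.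
have dualE a a' : ip (dual a) (g a') = (a == a')%:R.
  rewrite ipZl fmorphV /= conj_ip_self.
  have [<-|aa'] := eqVneq a a'; first by rewrite mulVf.
  by rewrite (g_orth a a') // mulr0.
have bg i : \sum_a rank1 (dual a) (xi (i.1, a)) (g i.2) = xi i.
  case: i => j a; rewrite (bigD1 a) //= /rank1 dualE eqxx scale1r.
  by rewrite big1 ?addr0 // => a' /negbTE a'a; rewrite dualE a'a scale0r.
have hbc j : is_adjoint ip (fun v => \sum_a rank1 (dual a) (xi (j, a)) v)
                           (fun v => \sum_a rank1 (xi (j, a)) (dual a) v).
  move=> x y; rewrite ip_suml ip_sumr; apply: eq_bigr => a _.
  by rewrite /rank1 ipZl ipZr -ipC mulrC.
have := cp_kernel_fin hlab (fun j => bounded_sum _ (fun a => bounded_rank1 _ _)) hbc hX posX g.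
by rewrite kernel_map_form //; under eq_bigr => i _ do under eq_bigr => j _ do rewrite !bg.
Qed.

Lemma psd_kernel_mx_unit T K D (lab : T -> L) (g : D -> H) (xi : T * K -> H) :
  orth_family g -> (forall j, A (lab j)) ->
  psd (fun i j : K * D => \sum_I \sum_J
         ip (xi (I, i.1)) (P (lab I) (lab J) (mx_unit g i.2 j.2) (xi (J, j.1)))).
Proof.
(* the form at z is the block form of the matrix units at w *)
move=> hg hlab z; pose w (i : T * D) := \sum_p z (p, i.2) *: xi (i.1, p).
have hE I J a b : bounded ip (P (lab I) (lab J) (mx_unit g a b)).
  by apply: (hP.1 _ _ (hlab I) (hlab J)).1; apply: bounded_rank1.
have := pos_kernel_block_orth (X := mx_unit g) hg hlab (fun a b => bounded_rank1 _ _)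
  (pos_fmx_mx_unit g) w.
rewrite /qf !pair_bigA2; congr (0 <= _).
transitivity (\sum_I \sum_J \sum_a \sum_b \sum_p \sum_q (z (p, a))^* * (z (q, b) *
    ip (xi (I, p)) (P (lab I) (lab J) (mx_unit g a b) (xi (J, q))))).
  apply: eq_bigr => I _; apply: eq_bigr => J _; apply: eq_bigr => a _; apply: eq_bigr => b _.
  rewrite /kernel_block /= (bounded_sum_morph _ _ _ (hE I J a b)) ip_suml; apply: eq_bigr => p _.
  rewrite ipZl ip_sumr mulr_sumr; apply: eq_bigr => q _.
  by rewrite (boundedZ _ _ (hE I J a b)) ipZr.
under eq_bigr => I _ do under eq_bigr => J _ do rewrite exchange_big22.
rewrite (exchange_big22 (I1 := T)); apply: eq_bigr => p _; apply: eq_bigr => q _.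
rewrite exchange_big22; apply: eq_bigr => a _; apply: eq_bigr => b _.
by rewrite mulr_sumr mulr_suml; apply: eq_bigr => I _; rewrite mulr_sumr mulr_suml;
   apply: eq_bigr => J _; ring.
Qed.

Lemma pos_kernel_block_basis T K D (lab : T -> L) (g : D -> H) (X : K -> K -> H -> H) :
  orth_family g -> (forall x, orth_expand g x = x) -> (forall j, A (lab j)) ->
  (forall p q, bounded ip (X p q)) -> pos_fmx X -> pos_fmx (kernel_block P lab X).
Proof.
move=> hg g_basis hlab hX posX xi.
suff -> : \sum_i \sum_j ip (xi i) (kernel_block P lab X i j (xi j)) =
    \sum_i \sum_j mx_coef g (X i.1 j.1) i.2 j.2 * \sum_I \sum_J
      ip (xi (I, i.1)) (P (lab I) (lab J) (mx_unit g i.2 j.2) (xi (J, j.1))).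
  exact: psd_sum_mul_ge0 (psd_mx_coef g hX posX) (psd_kernel_mx_unit xi hg hlab).
rewrite !pair_bigA2 (exchange_big22 (I1 := T)).
apply: eq_bigr => p _; apply: eq_bigr => q _.
have expand I J : ip (xi (I, p)) (P (lab I) (lab J) (X p q) (xi (J, q))) =
    \sum_a \sum_b mx_coef g (X p q) a b *
      ip (xi (I, p)) (P (lab I) (lab J) (mx_unit g a b) (xi (J, q))).
  rewrite {1}(mx_unit_expand g_basis (hX p q)).
  rewrite (linear_Bmap_sum _ _ (hP.1 _ _ (hlab I) (hlab J))) => [|ab]; last exact: bounded_rank1.
  rewrite ip_sumr (pair_bigA _ (fun a b => mx_coef g (X p q) a b *
    ip (xi (I, p)) (P (lab I) (lab J) (mx_unit g a b) (xi (J, q))))).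
  by apply: eq_bigr => -[a b] _; rewrite ipZr.
rewrite /kernel_block /=; under eq_bigr => I _ do under eq_bigr => J _ do rewrite expand.
rewrite exchange_big22; apply: eq_bigr => a _; apply: eq_bigr => b _.
by rewrite mulr_sumr; apply: eq_bigr => I _; rewrite mulr_sumr.
Qed.

Lemma pos_kernel_block T K (lab : T -> L) (X : K -> K -> H -> H) :
  (forall j, A (lab j)) -> (forall p q, bounded ip (X p q)) -> pos_fmx X ->
  pos_fmx (kernel_block P lab X).
Proof.
move=> hlab hX posX.
have [[g [g_nz g_orth]]|[d [g [hg g_basis]]]] := orth_family_or_basis #|K|.
  apply: (pos_kernel_block_orth (g := g \o enum_rank)) => //; split=> [a|a b ab]; first exact: g_nz.
  by apply: g_orth; apply: contra ab => /eqP/enum_rank_inj ->.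
exact: pos_kernel_block_basis hg g_basis hlab hX posX.
Qed.

End Kernels.

End HilbertSpace.

Theorem lemma10 (R : realType) (H : lmodType (complex R)) (ip : H -> H -> complex R)
    (L : Type) (S0 : L -> Prop) (chiRS chiST : L -> L)
    (Q P : L -> L -> Bmap H) :
  is_hilbert ip ->
  cp_kernel ip (image_set chiRS S0) Q ->
  cp_kernel ip (image_set chiST S0) P ->
  cp_kernel ip S0 (fun f g x => Q (chiRS f) (chiRS g) (P (chiST f) (chiST g) x)).
Proof.
move=> hH hQ hP.
have inQ f : S0 f -> image_set chiRS S0 (chiRS f) by exists f.
have inP f : S0 f -> image_set chiST S0 (chiST f) by exists f.
split=> [f g Sf Sg|n fs b c Sfs hb hbc m X hX posX].
  exact: linear_Bmap_comp (hQ.1 _ _ (inQ _ Sf) (inQ _ Sg)) (hP.1 _ _ (inP _ Sf) (inP _ Sg)).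
have labP j : image_set chiST S0 (chiST (fs j)) := inP _ (Sfs j).
have labQ (i : 'I_n * 'I_m) : image_set chiRS S0 (chiRS (fs i.1)) := inQ _ (Sfs i.1).
have hZ := kernel_block_bounded hP labP hX.
have posW := pos_kernel_block hH hQ labQ hZ (pos_kernel_block hH hP labP hX posX).
apply: (pos_kernel_map hH
  (P := fun f g x => Q (chiRS f) (chiRS g) (P (chiST f) (chiST g) x)) (lab := fs) hbc).
apply: (pos_fmx_comp hH (fun i => (i, i)) _ posW) => i j.
exact: bounded_additive (kernel_block_bounded hQ labQ hZ i j).
Qed.
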